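(* Let $G$ be a maximal outerplanar graph on more than $3$ vertices. Then there exists a vertex $v\in V(G)$ such that $d_G(v)=2$, $G-v$ is a maximal outerplanar graph, and at least one neighbour of $v$ has degree at most $4$ in $G$.
   Context: A graph is outerplanar if it can be drawn in the plane without crossings such that all vertices lie on the boundary of the unbounded region. A graph on at least $3$ vertices is maximal outerplanar if it is outerplanar and adding any edge between two non-adjacent vertices yields a graph that is not outerplanar. *)

(* A graph is given by a finite vertex set V : {set T} and a
   symmetric irreflexive adjacency relation e : rel T (only edges between
   vertices of V matter). *)
From mathcomp Require Import all_boot.
Set Implicit Arguments. Unset Strict Implicit. Unset Printing Implicit Defensive.

Section Graphs.
Variable T : finType.

(* Outerplanar: the vertices can be placed in (cyclic) order on a circle,
   given by an injective position map p, so that no two edges (drawn as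
   chords) cross, i.e. no edges ab, cd with p a < p c < p b < p d. *)
Definition outerplanar (V : {set T}) (e : rel T) : Prop :=
  exists p : T -> nat,
    {in V &, injective p} /\
    forall a b c d, a \in V -> b \in V -> c \in V -> d \in V ->
      e a b -> e c d -> ~ (p a < p c /\ p c < p b /\ p b < p d).

Definition add_edge (e : rel T) (u w : T) : rel T :=
  fun x y => [|| e x y, (x == u) && (y == w) | (x == w) && (y == u)].

Definition maximal_outerplanar (V : {set T}) (e : rel T) : Prop :=
  3 <= #|V| /\ outerplanar V e /\
  forall u w, u \in V -> w \in V -> u != w -> ~~ e u w ->
    ~ outerplanar V (add_edge e u w).

Definition deg (V : {set T}) (e : rel T) (v : T) : nat :=
  #|[set w in V | e v w]|.

End Graphs.

(* Fix a crossing-free placement of G on a circle, with positions 0, ..., n-1.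
   By maximality no chord can be added to it, so vertices that are consecutive
   on the circle, and also the vertices 0 and n-1, are adjacent.  Among the
   edges of span at least 3 choose one, ab, of minimal span: a vertex strictly
   between a and b only has neighbours in [a, b] at distance at most 2, hence
   degree at most 4, and one of a+1, a+2 is an ear, i.e. is adjacent only to
   its two circle neighbours.  Deleting an ear keeps the placement saturated,
   so by induction (using the ear inside a minimal edge of span 2) a saturated
   placement carries exactly 2n-3 edges, i.e. degree sum 4n-6.  Every
   outerplanar graph on n >= 2 vertices has at most 2n-3 edges, since it has
   a vertex of degree at most 2.  So G - v has the largest possible number of
   edges, which makes it maximal for every placement, not just the inherited
   one. *)

From mathcomp Require Import all_boot zify.
Set Implicit Arguments. Unset Strict Implicit. Unset Printing Implicit Defensive.

Section Outerplanar.
Variable T : finType.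
Implicit Types (V W : {set T}) (e f : rel T) (p r : T -> nat).

Definition noncrossing V e p :=
  forall a b c d, a \in V -> b \in V -> c \in V -> d \in V ->
    e a b -> e c d -> ~ (p a < p c /\ p c < p b /\ p b < p d).

Definition saturated V e p :=
  noncrossing V e p /\ forall u w, u \in V -> w \in V -> u != w -> ~~ e u w ->
    ~ noncrossing V (add_edge e u w) p.

Definition ear V e r x :=
  forall y, y \in V -> e x y -> r y = (r x).+1 \/ r x = (r y).+1.

Definition degsum V e := \sum_(x in V) deg V e x.

Lemma noncrossing_subset V W e p :
  W \subset V -> noncrossing V e p -> noncrossing W e p.
Proof. by move=> /subsetP sWV nc a b c d /sWV aV /sWV bV /sWV cV /sWV dV; apply: nc. Qed.

Lemma outerplanar_subset V W e : W \subset V -> outerplanar V e -> outerplanar W e.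
Proof.
move=> sWV [p [p_inj p_nc]]; exists p; split; last exact: noncrossing_subset p_nc.
by apply: sub_in2 p_inj; apply/subsetP.
Qed.

Lemma noncrossing_equiv V e p r : {in V &, forall x y, (p x < p y) = (r x < r y)} ->
  noncrossing V e p -> noncrossing V e r.
Proof.
move=> pr nc a b c d aV bV cV dV eab ecd.
by rewrite -(pr a c) // -(pr c b) // -(pr b d) //; apply: nc.
Qed.

Lemma saturated_equiv V e p r : {in V &, forall x y, (p x < p y) = (r x < r y)} ->
  saturated V e p -> saturated V e r.
Proof.
move=> pr [nc maxp]; split; first exact: noncrossing_equiv nc.
have rp : {in V &, forall x y, (r x < r y) = (p x < p y)} by move=> x y xV yV; rewrite pr.
by move=> u w uV wV uw euw /(noncrossing_equiv rp); apply: maxp.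
Qed.

(* An edge between two vertices that are adjacent on the circle crosses nothing. *)
Lemma noncrossing_add_ear V f p x : symmetric f ->
  noncrossing (V :\ x) f p -> ear V f p x -> noncrossing V f p.
Proof.
move=> f_sym nc x_ear a b c d aV bV cV dV fab fcd cross.
have [? | ax] := eqVneq a x; first by subst a; have := x_ear b bV fab; lia.
have [? | bx] := eqVneq b x.
  by subst b; rewrite f_sym in fab; have := x_ear a aV fab; lia.
have [? | cx] := eqVneq c x; first by subst c; have := x_ear d dV fcd; lia.
have [? | dx] := eqVneq d x.
  by subst d; rewrite f_sym in fcd; have := x_ear c cV fcd; lia.
by apply: (nc a b c d) => //; rewrite !inE ?ax ?bx ?cx ?dx.
Qed.

Lemma add_edgeP e y z u v :
  add_edge e y z u v -> [\/ e u v, u = y /\ v = z | u = z /\ v = y].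
Proof. by case/or3P=> [|/andP[/eqP-> /eqP->]|/andP[/eqP-> /eqP->]]; constructor. Qed.

Lemma add_edge_sym e u w : symmetric e -> symmetric (add_edge e u w).
Proof.
move=> e_sym a b; rewrite /add_edge e_sym.
by case: (b == u); case: (a == w); case: (b == w); case: (a == u); rewrite ?orbT ?orbF.
Qed.

Lemma add_edge_irr e u w : irreflexive e -> u != w -> irreflexive (add_edge e u w).
Proof.
move=> e_irr uw a; rewrite /add_edge e_irr /=.
by apply/norP; split; apply: contraNN uw => /andP[/eqP <- /eqP <-].
Qed.

Lemma exists_rank V p : {in V &, injective p} ->
  exists r, [/\ {in V &, injective r}, {in V, forall x, r x < #|V|}
              & {in V &, forall x y, (p x < p y) = (r x < r y)}].
Proof.
move=> p_inj; pose r x := #|[set y in V | p y < p x]|.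
have r_mono : {in V &, forall x y, p x < p y -> r x < r y}.
  move=> x y xV yV pxy; apply: proper_card; apply/properP; split.
    by apply/subsetP => z; rewrite !inE => /andP[-> /ltn_trans->].
  by exists x; rewrite !inE ?xV ?pxy ?ltnn.
have pr : {in V &, forall x y, (p x < p y) = (r x < r y)}.
  move=> x y xV yV.
  case: (ltngtP (p x) (p y)) => [pxy | pyx | /(p_inj x y xV yV)->]; last by rewrite ltnn.
    by rewrite (r_mono x y).
  by rewrite ltnNge ltnW // (r_mono y x).
exists r; split=> //.
- move=> x y xV yV rxy; apply: p_inj => //.
  case: (ltngtP (p x) (p y)) => // [/(r_mono x y xV yV) | /(r_mono y x yV xV)];
  by rewrite rxy ltnn.
- move=> x xV; apply: proper_card; apply/properP; split.
    by apply/subsetP => y /setIdP[].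
  by exists x; rewrite ?inE ?ltnn ?andbF.
Qed.

Lemma rank_onto V r : {in V &, injective r} -> {in V, forall x, r x < #|V|} ->
  forall k, k < #|V| -> exists2 x, x \in V & r x = k.
Proof.
move=> r_inj r_lt k kV.
have r_uniq : uniq (map r (enum V)).
  by rewrite map_inj_in_uniq ?enum_uniq // => x y; rewrite !mem_enum; apply: r_inj.
have r_sub : {subset map r (enum V) <= iota 0 #|V|}.
  by move=> i /mapP[x]; rewrite mem_enum => /r_lt ? ->; rewrite mem_iota.
have r_size : size (iota 0 #|V|) <= size (map r (enum V)).
  by rewrite size_iota size_map cardE.
have [_ r_enum] := uniq_min_size r_uniq r_sub r_size.
have : k \in iota 0 #|V| by rewrite mem_iota.
by rewrite -r_enum => /mapP[x]; rewrite mem_enum => xV ->; exists x.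
Qed.

Lemma noncrossing_rank V e p : {in V &, injective p} -> noncrossing V e p ->
  exists r, [/\ {in V &, injective r}, {in V, forall x, r x < #|V|} & noncrossing V e r].
Proof.
move=> /exists_rank[r [r_inj r_lt pr]] nc; exists r; split=> //.
exact: noncrossing_equiv nc.
Qed.

Lemma saturated_rank V e p : {in V &, injective p} -> saturated V e p ->
  exists r, [/\ {in V &, injective r}, {in V, forall x, r x < #|V|} & saturated V e r].
Proof.
move=> /exists_rank[r [r_inj r_lt pr]] p_sat; exists r; split=> //.
exact: saturated_equiv p_sat.
Qed.

Section Graph.
Variable e : rel T.
Hypotheses (e_sym : symmetric e) (e_irr : irreflexive e).

Lemma deg_sum V x : deg V e x = \sum_(y in V) e x y.
Proof.
rewrite /deg -sum1_card big_mkcond [RHS]big_mkcond /=; apply: eq_bigr => y _.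
by rewrite inE; case: (y \in V); case: (e x y).
Qed.

Lemma deg_setD1 V x y : x \in V -> deg V e y = e y x + deg (V :\ x) e y.
Proof. by move=> xV; rewrite !deg_sum (big_setD1 x xV). Qed.

Lemma degsum_setD1 V x : x \in V -> degsum V e = degsum (V :\ x) e + 2 * deg V e x.
Proof.
move=> xV; rewrite /degsum (big_setD1 x xV) /=.
under eq_bigr => y _ do rewrite (deg_setD1 y xV) e_sym.
by rewrite big_split /= -deg_sum (deg_setD1 x xV) e_irr /=; lia.
Qed.

Lemma deg_le_card V x : x \in V -> deg V e x <= #|V|.-1.
Proof.
move=> xV; rewrite /deg (cardsD1 x V) xV /=; apply: subset_leq_card.
apply/subsetP => y; rewrite !inE => /andP[yV exy]; rewrite yV andbT.
by apply: contraTneq exy => ->; rewrite e_irr.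
Qed.

Lemma degsum_le_card V : degsum V e <= #|V| * #|V|.-1.
Proof. by rewrite /degsum -sum_nat_const; apply: leq_sum => x; apply: deg_le_card. Qed.

Lemma deg_ge2 V x y z : y \in V -> z \in V -> y != z -> e x y -> e x z -> 1 < deg V e x.
Proof.
move=> yV zV yz exy exz; apply: leq_trans (_ : #|[set y; z]| <= _); first by rewrite cards2 yz.
apply: subset_leq_card.
by apply/subsetP => v; rewrite !inE => /orP[] /eqP->; rewrite ?yV ?zV ?exy ?exz.
Qed.

Lemma edge_rank_neq V r x y : {in V &, injective r} -> x \in V -> y \in V ->
  e x y -> r y != r x.
Proof. by move=> r_inj xV yV; apply: contraTneq => /(r_inj _ _ yV xV)->; rewrite e_irr. Qed.

Lemma deg_le_window V r x t : {in V &, injective r} -> x \in V ->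
  (forall y, y \in V -> e x y -> r x < r y + t /\ r y < r x + t) ->
  deg V e x <= 2 * t.-1.
Proof.
move=> r_inj xV near; pose L := iota (r x - t.-1) t.-1 ++ iota (r x).+1 t.-1.
have -> : 2 * t.-1 = size L by rewrite size_cat !size_iota mul2n addnn.
rewrite /deg cardE -(size_map r); apply: uniq_leq_size.
  rewrite map_inj_in_uniq ?enum_uniq // => y z; rewrite !mem_enum !inE.
  by move=> /andP[yV _] /andP[zV _]; apply: r_inj.
move=> k /mapP[y]; rewrite mem_enum inE => /andP[yV exy] ->.
have [lo hi] := near y yV exy; have := edge_rank_neq r_inj xV yV exy.
by rewrite mem_cat !mem_iota; lia.
Qed.

Lemma ear_deg_le2 V r x : {in V &, injective r} -> x \in V -> ear V e r x ->
  deg V e x <= 2.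
Proof.
move=> r_inj xV x_ear; apply: (deg_le_window (t := 2) r_inj xV) => y yV exy.
by have := x_ear y yV exy; lia.
Qed.

Lemma min_span_chord V r t : noncrossing V e r ->
  (exists a b, [/\ a \in V, b \in V, e a b & r a + t <= r b]) ->
  exists a b, [/\ a \in V, b \in V, e a b, r a + t <= r b &
    forall x y, x \in V -> y \in V -> r a < r x < r b -> e x y ->
      [/\ r a <= r y <= r b, r x < r y + t & r y < r x + t]].
Proof.
move=> nc [a0 [b0 [a0V b0V ea0b0 span0]]].
pose chord (ab : T * T) := [&& ab.1 \in V, ab.2 \in V, e ab.1 ab.2 & r ab.1 + t <= r ab.2].
have : chord (a0, b0) by apply/and4P.
case/(arg_minnP (fun ab => r ab.2 - r ab.1)) => -[a b] /= /and4P[aV bV eab span] ab_min.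
have longer u v : u \in V -> v \in V -> e u v -> r u + t <= r v -> r b - r a <= r v - r u.
  by move=> uV vV euv span_uv; apply: (ab_min (u, v)); apply/and4P.
exists a, b; split=> // x y xV yV /andP[ax xb] exy.
have eyx : e y x by rewrite e_sym.
have ay : r a <= r y by rewrite leqNgt; apply/negP => ya; apply: (nc y x a b) => //; lia.
have yb : r y <= r b by rewrite leqNgt; apply/negP => by_; apply: (nc a b x y) => //; lia.
rewrite ay yb; split=> //; rewrite ltnNge; apply/negP => far.
  by have := longer y x yV xV eyx far; lia.
by have := longer x y xV yV exy far; lia.
Qed.

Lemma exists_inner_ear V r : {in V &, injective r} -> {in V, forall x, r x < #|V|} ->
  noncrossing V e r -> (exists a b, [/\ a \in V, b \in V, e a b & r a + 2 <= r b]) ->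
  exists x, [/\ x \in V, 0 < r x, (r x).+1 < #|V| & ear V e r x].
Proof.
move=> r_inj r_lt nc /(min_span_chord nc)[a [b [aV bV eab span inner]]].
have b_lt := r_lt b bV.
have [x xV rx] : exists2 x, x \in V & r x = (r a).+1 by apply: (rank_onto r_inj r_lt); lia.
exists x; split=> //; try lia.
have x_in : r a < r x < r b by lia.
move=> y yV exy; have [_ lo hi] := inner x y xV yV x_in exy.
by have := edge_rank_neq r_inj xV yV exy; lia.
Qed.

Lemma exists_low_degree V r : {in V &, injective r} -> {in V, forall x, r x < #|V|} ->
  noncrossing V e r -> 0 < #|V| -> exists2 x, x \in V & deg V e x <= 2.
Proof.
move=> r_inj r_lt nc V0; have [x0 x0V rx0] := rank_onto r_inj r_lt V0.
pose far y := [&& y \in V, e x0 y & 1 < r y].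
have [/existsP[y /and3P[yV ex0y y_far]] | near] := boolP [exists y, far y].
  have [|x [xV _ _ x_ear]] := exists_inner_ear r_inj r_lt nc.
    by exists x0, y; rewrite rx0.
  by exists x => //; apply: ear_deg_le2 x_ear.
exists x0 => //; apply: (deg_le_window (t := 2) r_inj x0V) => y yV ex0y.
have : ~~ far y by apply: contra near => ?; apply/existsP; exists y.
by rewrite /far yV ex0y /= -leqNgt rx0; lia.
Qed.

Lemma degsum_outerplanar V : outerplanar V e -> 1 < #|V| -> degsum V e + 6 <= 4 * #|V|.
Proof.
have [n] := ubnP #|V|; elim: n V => // n IH V /ltnSE Vn op V2.
have [V_2 | V3] := leqP #|V| 2.
  have := degsum_le_card V; have -> : #|V| = 2 by lia.
  lia.
have [p [p_inj p_nc]] := op.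
have [r [r_inj r_lt r_nc]] := noncrossing_rank p_inj p_nc.
have [x xV x_deg] := exists_low_degree r_inj r_lt r_nc (ltnW V2).
have Vx : #|V :\ x| = #|V|.-1 by rewrite (cardsD1 x V) xV.
have /IH/(_ (outerplanar_subset (subsetDl V [set x]) op)) : #|V :\ x| < n by lia.
by rewrite (degsum_setD1 xV) Vx; lia.
Qed.

Lemma saturated_chord V r y z : saturated V e r -> y \in V -> z \in V -> r y < r z ->
  (forall c d, c \in V -> d \in V -> e c d -> r y < r c < r z -> r y <= r d <= r z) ->
  e y z.
Proof.
move=> [nc r_max] yV zV yz closed; apply/negPn/negP => neyz.
have y_neq_z : y != z by apply: contraTneq yz => ->; rewrite ltnn.
apply: (r_max y z yV zV y_neq_z neyz) => a b c d aV bV cV dV.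
move=> /add_edgeP[eab|[-> ->]|[-> ->]] /add_edgeP[ecd|[-> ->]|[-> ->]]; try lia.
- exact: nc.
- have eba : e b a by rewrite e_sym.
  by have := closed b a bV aV eba; lia.
- by have := closed c d cV dV ecd; lia.
Qed.

Lemma saturated_consecutive V r y z : saturated V e r -> y \in V -> z \in V ->
  r z = (r y).+1 -> e y z.
Proof. by move=> r_sat yV zV ryz; apply: (saturated_chord r_sat) => // [|c d _ _ _]; lia. Qed.

Lemma extreme_chord V r t : {in V &, injective r} -> {in V, forall x, r x < #|V|} ->
  saturated V e r -> 0 < t < #|V| ->
  exists a b, [/\ a \in V, b \in V, e a b & r a + t <= r b].
Proof.
move=> r_inj r_lt r_sat /andP[t_gt0 t_lt].
have [a aV ra] : exists2 a, a \in V & r a = 0 by apply: (rank_onto r_inj r_lt); lia.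
have [b bV rb] : exists2 b, b \in V & r b = #|V|.-1 by apply: (rank_onto r_inj r_lt); lia.
exists a, b; split=> //; last lia.
apply: (saturated_chord r_sat) => // [|c d _ dV _ _]; first lia.
by have := r_lt d dV; lia.
Qed.

Lemma ear_deg2 V r x : {in V &, injective r} -> {in V, forall x, r x < #|V|} ->
  saturated V e r -> x \in V -> 0 < r x -> (r x).+1 < #|V| -> ear V e r x ->
  deg V e x = 2.
Proof.
move=> r_inj r_lt r_sat xV x_gt0 x_lt x_ear.
have [y yV ry] : exists2 y, y \in V & r y = (r x).-1 by apply: (rank_onto r_inj r_lt); lia.
have [z zV rz] := rank_onto r_inj r_lt x_lt.
apply/eqP; rewrite eqn_leq (ear_deg_le2 r_inj xV x_ear); apply: (deg_ge2 yV zV).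
- by apply/eqP => yz; move: rz; rewrite -yz ry; lia.
- by rewrite e_sym; apply: (saturated_consecutive r_sat yV xV); lia.
- exact: (saturated_consecutive r_sat xV zV).
Qed.

Lemma saturated_setD1_ear V r x : saturated V e r -> x \in V -> ear V e r x ->
  saturated (V :\ x) e r.
Proof.
move=> [nc r_max] xV x_ear; split; first exact: noncrossing_subset (subsetDl V [set x]) nc.
move=> u w /setD1P[ux uV] /setD1P[wx wV] uw euw ncx; apply: (r_max u w uV wV uw euw).
apply: noncrossing_add_ear (add_edge_sym u w e_sym) ncx _ => y yV.
by rewrite /add_edge ![x == _]eq_sym (negbTE ux) (negbTE wx) /= orbF; apply: x_ear.
Qed.

Lemma degsum_saturated V p : {in V &, injective p} -> saturated V e p -> 1 < #|V| ->
  degsum V e + 6 = 4 * #|V|.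
Proof.
have [n] := ubnP #|V|; elim: n V p => // n IH V p /ltnSE Vn p_inj p_sat V2.
have [r [r_inj r_lt r_sat]] := saturated_rank p_inj p_sat.
have [V_2 | V3] := leqP #|V| 2.
  have [y yV ry] : exists2 y, y \in V & r y = 0 by apply: (rank_onto r_inj r_lt); lia.
  have [z zV rz] : exists2 z, z \in V & r z = 1 by apply: (rank_onto r_inj r_lt); lia.
  have eyz : e y z by apply: (saturated_consecutive r_sat yV zV); rewrite ry rz.
  have y_deg : 0 < deg V e y by apply/card_gt0P; exists z; rewrite inE zV eyz.
  have := degsum_setD1 yV; have := degsum_le_card V.
  have -> : #|V| = 2 by lia.
  lia.
have [|x [xV x_gt0 x_lt x_ear]] := exists_inner_ear r_inj r_lt r_sat.1.
  by apply: extreme_chord r_inj r_lt r_sat _; lia.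
have x_deg := ear_deg2 r_inj r_lt r_sat xV x_gt0 x_lt x_ear.
have rx_inj : {in V :\ x &, injective r} by apply: sub_in2 r_inj => y /setD1P[].
have Vx : #|V :\ x| = #|V|.-1 by rewrite (cardsD1 x V) xV.
have /IH/(_ rx_inj (saturated_setD1_ear r_sat xV x_ear)) : #|V :\ x| < n by lia.
by rewrite (degsum_setD1 xV) x_deg Vx; lia.
Qed.

Lemma exists_ear_light_neighbour V r :
  {in V &, injective r} -> {in V, forall x, r x < #|V|} -> saturated V e r -> 3 < #|V| ->
  exists x, [/\ x \in V, deg V e x = 2, ear V e r x &
    exists w, [/\ w \in V, e x w & deg V e w <= 4]].
Proof.
move=> r_inj r_lt r_sat V4; have nc := r_sat.1.
have [|a [b [aV bV eab span inner]]] := min_span_chord (t := 3) nc.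
  by apply: extreme_chord r_inj r_lt r_sat _; lia.
have b_lt := r_lt b bV.
have [x1 x1V r1] : exists2 x, x \in V & r x = (r a).+1 by apply: (rank_onto r_inj r_lt); lia.
have [x2 x2V r2] : exists2 x, x \in V & r x = (r a).+2 by apply: (rank_onto r_inj r_lt); lia.
have [x3 x3V r3] : exists2 x, x \in V & r x = (r a).+3 by apply: (rank_onto r_inj r_lt); lia.
have light y : y \in V -> r a < r y < r b -> deg V e y <= 4.
  move=> yV ay; apply: (deg_le_window (t := 3) r_inj yV) => z zV eyz.
  by have [] := inner y z yV zV ay eyz.
have e12 : e x1 x2 by apply: (saturated_consecutive r_sat x1V x2V); lia.
have [e13 | ne13] := boolP (e x1 x3).
- have x2_ear : ear V e r x2.
    have x2_in : r a < r x2 < r b by lia.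
    move=> y yV e2y; have [ay lo hi] := inner x2 y x2V yV x2_in e2y.
    have ey2 : e y x2 by rewrite e_sym.
    have ya : r y != r a by apply/eqP => ya; apply: (nc y x2 x1 x3) => //; lia.
    have y4 : r y != (r a).+4 by apply/eqP => y4; apply: (nc x1 x3 x2 y) => //; lia.
    by have := edge_rank_neq r_inj x2V yV e2y; lia.
  exists x2; split=> //; first by apply: ear_deg2 x2_ear => //; lia.
  by exists x1; rewrite e_sym e12 light //; lia.
- have x1_ear : ear V e r x1.
    have x1_in : r a < r x1 < r b by lia.
    move=> y yV e1y; have [ay lo hi] := inner x1 y x1V yV x1_in e1y.
    have y3 : r y != r x3 by apply: contraNneq ne13 => /(r_inj _ _ yV x3V) <-.
    by have := edge_rank_neq r_inj x1V yV e1y; lia.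
  exists x1; split=> //; first by apply: ear_deg2 x1_ear => //; lia.
  by exists x2; rewrite e12 light //; lia.
Qed.

End Graph.

Lemma degsum_eq_in V e f : {in V &, e =2 f} -> degsum V e = degsum V f.
Proof.
move=> ef; apply: eq_bigr => x xV; rewrite !deg_sum; apply: eq_bigr => y yV.
by rewrite ef.
Qed.

Lemma degsum_add_edge V e u w : symmetric e -> irreflexive e ->
  u \in V -> w \in V -> u != w -> ~~ e u w ->
  degsum V (add_edge e u w) = (degsum V e).+2.
Proof.
move=> e_sym e_irr uV wV uw euw.
rewrite (degsum_setD1 (add_edge_sym u w e_sym) (add_edge_irr e_irr uw) uV).
rewrite (degsum_setD1 e_sym e_irr uV) (@degsum_eq_in _ _ e); last first.
  move=> y z /setD1P[yu _] /setD1P[zu _].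
  by rewrite /add_edge (negbTE yu) (negbTE zu) /= andbF orbF.
have -> : deg V (add_edge e u w) u = (deg V e u).+1.
  rewrite !deg_sum !(big_setD1 w wV) /add_edge eqxx (negbTE euw) (negbTE uw) /= eqxx.
  rewrite orTb add0n add1n; congr (_.+1).
  by apply: eq_bigr => y /setD1P[yw _]; rewrite (negbTE yw) !orbF.
by lia.
Qed.

Lemma degsum_maximal V e : symmetric e -> irreflexive e -> 2 < #|V| ->
  outerplanar V e -> degsum V e + 6 = 4 * #|V| -> maximal_outerplanar V e.
Proof.
move=> e_sym e_irr V3 op full; do 2!split=> //.
move=> u w uV wV uw euw.
move/(degsum_outerplanar (add_edge_sym u w e_sym) (add_edge_irr e_irr uw)).
by rewrite degsum_add_edge //; lia.
Qed.

End Outerplanar.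

Theorem lemma2p2 (T : finType) (V : {set T}) (e : rel T) :
  symmetric e -> irreflexive e ->
  maximal_outerplanar V e -> 3 < #|V| ->
  exists v, [/\ v \in V, deg V e v = 2,
    maximal_outerplanar (V :\ v) e &
    exists w, [/\ w \in V, e v w & deg V e w <= 4]].
Proof.
move=> e_sym e_irr [V3 [op p_max]] V4; have [p [p_inj p_nc]] := op.
have p_sat : saturated V e p.
  by split=> // u w uV wV uw euw nc; apply: (p_max u w uV wV uw euw); exists p.
have [r [r_inj r_lt r_sat]] := saturated_rank p_inj p_sat.
have [x [xV x_deg x_ear x_light]] :=
  exists_ear_light_neighbour e_sym e_irr r_inj r_lt r_sat V4.
have Vx : #|V :\ x| = #|V|.-1 by rewrite (cardsD1 x V) xV.
have rx_inj : {in V :\ x &, injective r} by apply: sub_in2 r_inj => y /setD1P[].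
exists x; split=> //; apply: degsum_maximal => //; first by rewrite Vx; lia.
  exact: outerplanar_subset (subsetDl V [set x]) op.
apply: (degsum_saturated e_sym e_irr rx_inj (saturated_setD1_ear e_sym r_sat xV x_ear)).
by rewrite Vx; lia.
Qed.
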